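(* Let $n,m\ge1$ and let $p=p_{n,m}$ be stable of degree $n$ in $z$ and $m$ in $w$. Define $$L(z,w;\eta)=z^n\,\frac{p(z,w)\overline{p(1/\bar z,\eta)}-\tilde p(z,w)\overline{\tilde p(1/\bar z,\eta)}}{1-w\bar\eta}.$$ Then: (1) $L$ is a polynomial in $(z,w,\bar\eta)$, of degree at most $2n$ in $z$, at most $m-1$ in $w$ and at most $m-1$ in $\bar\eta$; (2) as $\eta$ ranges over $\mathbb{C}$, the polynomials $L(\cdot,\cdot;\eta)$ span a vector space of dimension exactly $m$; (3) $L(z,w;\eta)=z^{2n}(w\bar\eta)^{m-1}\overline{L(1/\bar z,1/\bar w;1/\bar\eta)}$; consequently, writing $L(z,w;\eta)=\sum_{j=0}^{m-1}a_j(z,w)\bar\eta^j$, one has $a_k(z,w)=z^{2n}w^{m-1}\overline{a_{m-k-1}(1/\bar z,1/\bar w)}$ for $0\le k\le m-1$; (4) there are polynomials $A(z,w;\eta)$, $B(z,w;\eta)$ in $(z,w,\bar\eta)$, of degree at most $n$ in $z$, at most $m-1$ in $w$ and at most $m-1$ in $\bar\eta$, such that $L=p\,A+\tilde p\,B$.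
   Context: A polynomial $p\in\mathbb{C}[z,w]$ is stable if $p(z,w)\neq0$ whenever $|z|\le1,|w|\le1$. The reflection is $\tilde p(z,w)=z^nw^m\overline{p(1/\bar z,1/\bar w)}$. Here $\eta\in\mathbb{C}$ is a parameter and the expression for $L$ is understood as a rational function in $z,w,\bar\eta$. *)

(* C : numClosedFieldType plays the role of the complex numbers. *)
From HB Require Import structures.
From mathcomp Require Import all_boot all_order all_algebra.
Set Implicit Arguments. Unset Strict Implicit. Unset Printing Implicit Defensive.
Import Order.TTheory GRing.Theory Num.Theory.
Local Open Scope ring_scope.

Section Defs.
Variable C : numClosedFieldType.

(* Bivariate polynomials p(z,w) : {poly {poly C}}, outer variable w, inner z:
   p = \sum_j p`_j(z) w^j. *)
Definition ev2 (p : {poly {poly C}}) (z w : C) : C := (p.[w%:P]).[z].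

(* Trivariate polynomials P(z,w,e) : {poly {poly {poly C}}}, outer variable e
   (standing for conj eta), then w, then z.  evL P z w eta = P(z, w, conj eta). *)
Definition ev3 (P : {poly {poly {poly C}}}) (z w e : C) : C :=
  ((P.[e%:P%:P]).[w%:P]).[z].
Definition evL (P : {poly {poly {poly C}}}) (z w eta : C) : C := ev3 P z w (eta^*).

Definition bideg (n m : nat) (p : {poly {poly C}}) : Prop :=
  size p = m.+1 /\ (forall j, leq (size p`_j) n.+1) /\ (exists j, size p`_j = n.+1).

Definition stable (p : {poly {poly C}}) : Prop :=
  forall z w : C, `|z| <= 1 -> `|w| <= 1 -> ev2 p z w != 0.

(* reflection  ptilde(z,w) = z^n w^m conj(p(1/conj z, 1/conj w)), written as
   the polynomial it equals: coefficient of z^i w^j is conj(p_{n-i,m-j}). *)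
Definition refl (n m : nat) (p : {poly {poly C}}) : {poly {poly C}} :=
  \poly_(j < m.+1) \poly_(i < n.+1) ((p`_(m - j))`_(n - i))^*.

Definition Lfun (n m : nat) (p : {poly {poly C}}) (z w eta : C) : C :=
  z ^+ n * (ev2 p z w * (ev2 p (z^*)^-1 eta)^*
            - ev2 (refl n m p) z w * (ev2 (refl n m p) (z^*)^-1 eta)^*)
  / (1 - w * eta^*).

Definition degs3 (dz dw de : nat) (P : {poly {poly {poly C}}}) : Prop :=
  leq (size P) de.+1 /\ (forall k, leq (size P`_k) dw.+1) /\
  (forall k j, leq (size (P`_k)`_j) dz.+1).

End Defs.

From HB Require Import structures.
From mathcomp Require Import all_boot all_order all_algebra.
From mathcomp Require Import ring zify.
Import Order.TTheory GRing.Theory Num.Theory.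
Local Open Scope ring_scope.
Set Implicit Arguments. Unset Strict Implicit. Unset Printing Implicit Defensive.

(* The whole argument rests on an explicit division by 1 - w e.  For q of
   w-degree <= m, the truncated quotient
       quot q = \sum_(k < m) e^k (q_(m-k) + q_(m-k+1) w + ... + q_m w^k)
   satisfies (1 - w e) quot q = revq q - e^m q, where revq q = \sum_k q_(m-k) e^k is the
   reversal of q written in e (lemma quotP).  Hence L := p quot ptilde - ptilde quot p
   satisfies (1 - w e) L = p revq ptilde - ptilde revq p, the e^m terms cancelling, and
   revq ptilde (z, conj eta) = z^n conj p(1/conj z, eta).  This identifies L with the
   kernel, gives the decomposition (4) with A = quot ptilde, B = - quot p, and the degree
   bounds (1): division by 1 - w e does not raise the w-degree.
   The symmetry (3) is first checked at generic points, from the formula for L obtained by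
   evaluating revq at e and the reflection identity for ptilde, then lifted to an identity
   of polynomials in e, whose coefficients give the relation between a_k and a_(m-1-k).
   For (2), the specialisation z = 1 makes p(1,.) and ptilde(1,.) coprime by stability,
   with ptilde(1,.) of degree exactly m; this forces the coefficients a_0, ..., a_(m-1) of
   L in e to be linearly independent, and evaluating L at the nodes eta = 0, ..., m-1 gives
   a basis of their span through an invertible Vandermonde matrix. *)

Section TruncatedQuotient.
Variables (S : nzRingType) (m : nat).

Definition tail (q : {poly S}) (k : nat) : {poly S} := \poly_(i < k.+1) q`_(m - k + i).

(* The quotient of revq q - e^m q by 1 - w e, as a polynomial in e over S[w]. *)
Definition quot (q : {poly S}) : {poly {poly S}} := \poly_(k < m) tail q k.

Definition revq (q : {poly S}) : {poly {poly S}} := \poly_(k < m.+1) (q`_(m - k))%:P.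

Lemma coef_one_sub_we (P : {poly {poly S}}) k :
  ((1 - 'X%:P * 'X) * P)`_k.+1 = P`_k.+1 - 'X * P`_k.
Proof. by rewrite mulrBl mul1r -mulrA coefB coefCM coefXM. Qed.

Lemma tailS (q : {poly S}) k : (k < m)%N -> tail q k.+1 = (q`_(m - k.+1))%:P + 'X * tail q k.
Proof.
move=> km; apply/polyP => j; rewrite coefD coefC coefXM !coef_poly.
case: j => [|j] /=; first by rewrite addn0 addr0.
by rewrite add0r ltnS; case: ifP => // _; congr (q`_ _); lia.
Qed.

Lemma tail_full (q : {poly S}) : (size q <= m.+1)%N -> tail q m = q.
Proof.
move=> sq; apply/polyP => j; rewrite coef_poly subnn add0n.
by case: ifP => // /negbT; rewrite -leqNgt => /(leq_trans sq) /leq_sizeP ->.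
Qed.

(* The division identity; it telescopes along tailS. *)
Lemma quotP (q : {poly S}) : (size q <= m.+1)%N ->
  (1 - 'X%:P * 'X) * quot q = revq q - 'X^m * q%:P.
Proof.
move=> sq; apply/polyP => -[|k].
  rewrite mulrBl mul1r -mulrA coefB coefCM coefXM !coefB coefXnM coefC !coef_poly /=.
  rewrite mulr0 subr0; have [m0|m_gt0] := posnP m.
    by rewrite m0 /= subn0 in sq *; rewrite {2}(size1_polyC sq) subrr.
  rewrite subr0 subn0; apply/polyP => -[|j]; rewrite coef_poly coefC //=.
  by rewrite subn0 addn0.
rewrite coef_one_sub_we coefB coefXnM !coef_poly coefC ltnS.
have [km1|mk] := ltnP k.+1 m.
  by rewrite (ltnW km1) tailS ?(ltnW km1) // subr0; apply: addrK.
have [ek|mk'] := eqVneq k.+1 m.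
  have km : (k < m)%N by rewrite -ek.
  have tail_top := tailS q km; rewrite ek tail_full // subnn in tail_top.
  rewrite km -ek subnn eqxx sub0r {3}tail_top.
  by rewrite opprD addNKr.
have k_m : (k < m)%N = false by apply/negbTE; lia.
by rewrite k_m (_ : (k.+1 - m)%N == 0%N = false) ?mulr0 ?subrr //; apply/negbTE; lia.
Qed.

Lemma quot_coef_size (q : {poly S}) k : leq (size (quot q)`_k) m.
Proof.
rewrite coef_poly; case: ifP => km; last by rewrite size_poly0.
exact: leq_trans (size_poly _ _) km.
Qed.

Lemma quot_coef_coef (P : pred S) (q : {poly S}) :
  P 0 -> (forall j, P q`_j) -> forall k j, P ((quot q)`_k)`_j.
Proof.
move=> P0 Pq k j; rewrite coef_poly; case: ifP => _; last by rewrite coef0.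
by rewrite coef_poly; case: ifP.
Qed.

End TruncatedQuotient.

Section BivariateDegrees.
Variable S : nzRingType.

(* Dividing by 1 - w e does not raise the w-degree: if the e-coefficients of
   (1 - w e) P have w-degree <= d, then so do those of P (downward induction on the
   e-degree, starting from the vanishing top coefficient). *)
Lemma size_coef_div_one_sub_we (P : {poly {poly S}}) d :
  (size P <= d)%N -> (forall k, leq (size ((1 - 'X%:P * 'X) * P)`_k.+1) d.+1) ->
  forall k, leq (size P`_k) d.
Proof.
move=> sP hnum.
suff top_down j : leq (size P`_(d - j)) d.
  move=> k; have [kd|dk] := ltnP k d; last first.
    by rewrite nth_default ?size_poly0 // (leq_trans sP).
  by have := top_down (d - k)%N; rewrite subKn // ltnW.
elim: j => [|j IH]; first by rewrite subn0 nth_default ?size_poly0.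
have [dj|jd] := leqP d j; first by rewrite (_ : d - j.+1 = d - j)%N //; lia.
have ek : (d - j = (d - j.+1).+1)%N by lia.
rewrite ek in IH; move: (hnum (d - j.+1)%N); rewrite coef_one_sub_we.
set P1 := P`_(d - j.+1).+1; set P0 := P`_(d - j.+1) => hdiff.
have hX : leq (size (P0 * 'X)) d.+1.
  rewrite commr_polyX -[_ * P0](subKr P1).
  apply: leq_trans (size_polyD _ _) _; rewrite size_polyN geq_max hdiff andbT.
  exact: leq_trans IH _.
have [->|P0_neq0] := eqVneq P0 0; first by rewrite size_poly0.
by rewrite size_mulX in hX.
Qed.

Lemma size_coef_mul (a b : {poly {poly S}}) da db :
  (forall j, leq (size a`_j) da.+1) -> (forall j, leq (size b`_j) db.+1) ->
  forall j, leq (size (a * b)`_j) (da + db).+1.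
Proof.
move=> ha hb j; rewrite coefM; apply: leq_trans (size_sum _ _ _) _.
apply/bigmax_leqP => i _; apply: leq_trans (size_polyMleq _ _) _.
by have := ha i; have := hb (j - i)%N; lia.
Qed.

End BivariateDegrees.

Lemma expr_sub_inv (F : fieldType) (z : F) (i k : nat) : z != 0 -> (i <= k)%N ->
  z ^+ (k - i) = z ^+ k * z^-1 ^+ i.
Proof. by move=> z0 ik; rewrite exprVn exprB ?unitfE. Qed.

Lemma conjC_inv_conj (C : numClosedFieldType) (z : C) : ((z^*)^-1)^* = z^-1.
Proof. by rewrite fmorphV; congr (_^-1); apply: conjCK. Qed.

Lemma poly_eq0_everywhere (R : numDomainType) (q : {poly R}) :
  (forall x, q.[x] = 0) -> q = 0.
Proof.
move=> q_root; apply/eqP; apply: contraT => q_neq0.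
pose xs := [seq (i%:R : R) | i <- iota 0 (size q)].
have all_roots : all (root q) xs by apply/allP => x _; rewrite /root q_root.
have xs_uniq : uniq xs.
  by rewrite map_inj_uniq ?iota_uniq // => i j /eqP; rewrite eqr_nat => /eqP.
by have := max_poly_roots q_neq0 all_roots xs_uniq; rewrite size_map size_iota ltnn.
Qed.

Lemma scale_sum_distinct_sizes (R : idomainType) (N : nat) (d : 'I_N -> R)
    (Q : nat -> {poly R}) :
  (forall k : 'I_N, size (Q k) = k.+1) -> \sum_(k < N) d k *: Q k = 0 -> forall k, d k = 0.
Proof.
elim: N d => [|N IH] d sizeQ sum0 k; first by case: k.
rewrite big_ord_recr /= in sum0.
have sizeQ' (j : 'I_N) : size (Q j) = j.+1 by have /= := sizeQ (widen_ord (leqnSn N) j).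
have top0 : d ord_max = 0.
  have := congr1 (fun q : {poly R} => q`_N) sum0; rewrite coefD coef_sum big1 => [|j _]; last first.
    by rewrite coefZ nth_default ?mulr0 // sizeQ'.
  rewrite add0r coefZ coef0 => /eqP; rewrite mulf_eq0 => /orP [/eqP //|].
  have /= sizeN := sizeQ ord_max.
  have -> : (Q N)`_N = lead_coef (Q N) by rewrite lead_coefE sizeN.
  by rewrite lead_coef_eq0 -size_poly_eq0 sizeN.
move: sum0; rewrite top0 scale0r addr0 => /(IH _ sizeQ') low0.
have [kN|Nk] := ltnP k N; first by rewrite -(low0 (Ordinal kN)); congr d; apply/val_inj.
by rewrite (_ : k = ord_max) //; apply/val_inj/eqP; rewrite eqn_leq Nk -ltnS ltn_ord.
Qed.

Section Vandermonde.
Variable R : numFieldType.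

Lemma horner_lift2 (P : {poly {poly {poly R}}}) N x : leq (size P) N ->
  P.[x%:P%:P] = \sum_(k < N) (x ^+ k)%:P%:P * P`_k.
Proof.
move=> sP; rewrite (horner_coef_wide _ sP); apply: eq_bigr => k _.
by rewrite mulrC -!rmorphXn.
Qed.

(* A linear combination of such evaluations, regrouped by e-coefficients; the
   coefficients form the product of a Vandermonde matrix with c. *)
Lemma sum_horner_lift2 (P : {poly {poly {poly R}}}) N (c a : 'I_N -> R) :
  leq (size P) N ->
  \sum_(i < N) (c i)%:P%:P * P.[(a i)%:P%:P] =
  \sum_(k < N) (\sum_(i < N) c i * a i ^+ k)%:P%:P * P`_k.
Proof.
move=> sP; under eq_bigr => i _ do rewrite (horner_lift2 _ sP) mulr_sumr.
rewrite exchange_big /=; apply: eq_bigr => k _.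
rewrite !rmorph_sum mulr_suml; apply: eq_bigr => i _.
by rewrite !rmorphM mulrA.
Qed.

Definition nat_nodes N : 'I_N -> R := fun i => (i : nat)%:R.

Lemma nat_vandermonde_unit N : Vandermonde N (\row_j nat_nodes j) \in unitmx.
Proof.
rewrite unitmxE det_Vandermonde unitfE; apply/prodf_neq0 => i _.
apply/prodf_neq0 => j ij; rewrite !mxE subr_eq0 eqr_nat.
by apply: contraTneq ij => ->; rewrite ltnn.
Qed.

End Vandermonde.

Section Kernel.
Variables (C : numClosedFieldType) (n m : nat) (p : {poly {poly C}}).
Local Notation pt := (refl n m p).

Lemma quot_zdeg (q : {poly {poly C}}) d : (forall j, leq (size q`_j) d) ->
  forall k j, leq (size ((quot m q)`_k)`_j) d.
Proof.
move=> q_zdeg; apply: (@quot_coef_coef _ m (fun c : {poly C} => leq (size c) d)) => //.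
by rewrite size_poly0.
Qed.

Lemma degs3_quot (q : {poly {poly C}}) : (1 <= m)%N ->
  (forall j, leq (size q`_j) n.+1) -> degs3 n (m - 1) (m - 1) (quot m q).
Proof.
move=> m_gt0 q_zdeg; rewrite /degs3 subn1 prednK //.
by split; [exact: size_poly | split; [exact: quot_coef_size | exact: quot_zdeg]].
Qed.

Lemma degs3N (dz dw de : nat) (P : {poly {poly {poly C}}}) :
  degs3 dz dw de P -> degs3 dz dw de (- P).
Proof.
rewrite /degs3 size_polyN => -[sP [P_wdeg P_zdeg]]; split=> //.
by split=> [k|k j]; rewrite !coefN ?size_polyN.
Qed.

Lemma size_refl : leq (size pt) m.+1.
Proof. exact: size_poly. Qed.

Lemma size_refl_coef j : leq (size pt`_j) n.+1.
Proof. by rewrite coef_poly; case: ifP; rewrite ?size_poly0 ?size_poly. Qed.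

Definition Lpoly : {poly {poly {poly C}}} := p%:P * quot m pt - pt%:P * quot m p.

Lemma Lpoly_decomp : Lpoly = p%:P * quot m pt + pt%:P * - quot m p.
Proof. by rewrite mulrN. Qed.

Lemma size_Lpoly : leq (size Lpoly) m.
Proof.
apply: leq_trans (size_polyD _ _) _; rewrite size_polyN geq_max.
by rewrite !mul_polyC !(leq_trans (size_scale_leq _ _)) ?size_poly.
Qed.

Hypothesis p_wdeg : leq (size p) m.+1.
Hypothesis p_zdeg : forall j, leq (size p`_j) n.+1.

Lemma Lpoly_num : (1 - 'X%:P * 'X) * Lpoly = p%:P * revq m pt - pt%:P * revq m p.
Proof.
rewrite mulrBr [_ * (p%:P * _)]mulrCA [_ * (pt%:P * _)]mulrCA.
rewrite (quotP size_refl) (quotP p_wdeg) !mulrBr opprB.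
have -> : pt%:P * ('X^m * p%:P) = p%:P * ('X^m * pt%:P).
  by rewrite mulrCA [RHS]mulrCA [pt%:P * _]mulrC.
by rewrite addrA subrK.
Qed.

(* L has degree < m in w, since the numerator has w-degree <= m. *)
Lemma Lpoly_wdeg k : leq (size Lpoly`_k) m.
Proof.
apply: size_coef_div_one_sub_we size_Lpoly _ k => {}k.
rewrite Lpoly_num coefB !coefCM !coef_poly.
case: ifP => _; last by rewrite !mulr0 subr0 size_poly0.
apply: leq_trans (size_polyD _ _) _; rewrite size_polyN geq_max.
by rewrite ![_ * _%:P]mulrC !mul_polyC !(leq_trans (size_scale_leq _ _)) ?size_refl.
Qed.

Lemma degs3_Lpoly : (1 <= m)%N -> degs3 (2 * n) (m - 1) (m - 1) Lpoly.
Proof.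
move=> m_gt0; rewrite /degs3 subn1 prednK //.
split; first exact: size_Lpoly.
split=> [k|k j]; first exact: Lpoly_wdeg.
rewrite coefB !coefCM coefB; apply: leq_trans (size_polyD _ _) _.
rewrite size_polyN geq_max mul2n -addnn.
by rewrite (size_coef_mul p_zdeg (quot_zdeg size_refl_coef k))
  (size_coef_mul size_refl_coef (quot_zdeg p_zdeg k)).
Qed.

Lemma ev2_sum (q : {poly {poly C}}) z w N : leq (size q) N ->
  ev2 q z w = \sum_(j < N) (q`_j).[z] * w ^+ j.
Proof.
move=> sq; rewrite /ev2 (horner_coef_wide _ sq) horner_sum; apply: eq_bigr => j _.
by rewrite hornerM -rmorphXn hornerC.
Qed.

Lemma ev3_sum (P : {poly {poly {poly C}}}) z w e N : leq (size P) N ->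
  ev3 P z w e = \sum_(k < N) ev2 P`_k z w * e ^+ k.
Proof.
move=> sP; rewrite /ev3 (horner_coef_wide _ sP) !horner_sum; apply: eq_bigr => k _.
by rewrite hornerM -!rmorphXn hornerC hornerM hornerC.
Qed.

Lemma ev3M (P Q : {poly {poly {poly C}}}) z w e :
  ev3 (P * Q) z w e = ev3 P z w e * ev3 Q z w e.
Proof. by rewrite /ev3 !hornerM. Qed.

Lemma ev3B (P Q : {poly {poly {poly C}}}) z w e :
  ev3 (P - Q) z w e = ev3 P z w e - ev3 Q z w e.
Proof. by rewrite /ev3 !hornerE. Qed.

Lemma ev3C (q : {poly {poly C}}) z w e : ev3 q%:P z w e = ev2 q z w.
Proof. by rewrite /ev3 hornerC. Qed.

Lemma ev3_revq (q : {poly {poly C}}) z w e :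
  ev3 (revq m q) z w e = \sum_(k < m.+1) (q`_(m - k)).[z] * e ^+ k.
Proof.
rewrite /ev3 horner_poly !horner_sum; apply: eq_bigr => k _.
by rewrite !hornerE.
Qed.

Lemma ev3_revq_rev (q : {poly {poly C}}) z w e : e != 0 -> leq (size q) m.+1 ->
  ev3 (revq m q) z w e = e ^+ m * ev2 q z e^-1.
Proof.
move=> e0 sq; rewrite ev3_revq (ev2_sum _ _ sq) mulr_sumr (reindex_inj rev_ord_inj) /=.
apply: eq_bigr => k _; have km : (k <= m)%N by rewrite -ltnS.
by rewrite !subSS (subKn km) (expr_sub_inv e0 km) mulrCA.
Qed.

Lemma refl_coef_horner j z : leq j m -> z != 0 ->
  (pt`_(m - j)).[z] = z ^+ n * ((p`_j).[(z^*)^-1])^*.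
Proof.
move=> jm z0.
rewrite coef_poly ltnS leq_subr subKn // horner_poly.
rewrite (horner_coef_wide _ (p_zdeg j)) rmorph_sum mulr_sumr /=.
rewrite (reindex_inj rev_ord_inj) /=; apply: eq_bigr => i _; rewrite subSS.
have i_n : (i <= n)%N by rewrite -ltnS.
rewrite rmorphM rmorphXn /= conjC_inv_conj subKn // expr_sub_inv //.
by rewrite mulrCA mulrA.
Qed.

(* The same identity read backwards, since reflection is an involution. *)
Lemma refl_coef_horner_sym j z : leq j m -> z != 0 ->
  (p`_(m - j)).[z] = z ^+ n * ((pt`_j).[(z^*)^-1])^*.
Proof.
move=> jm z0; have z'0 : (z^*)^-1 != 0 by rewrite invr_eq0 conjC_eq0.
have := refl_coef_horner (leq_subr j m) z'0.
rewrite subKn // conjC_inv_conj invrK => ->.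
rewrite rmorphM rmorphXn /= conjCK conjC_inv_conj mulrA -exprMn mulfV //.
by rewrite expr1n mul1r.
Qed.

Lemma ev2_refl z w : z != 0 -> w != 0 ->
  ev2 pt z w = z ^+ n * w ^+ m * (ev2 p (z^*)^-1 (w^*)^-1)^*.
Proof.
move=> z0 w0; rewrite (ev2_sum _ _ size_refl) (ev2_sum _ _ p_wdeg).
rewrite (reindex_inj rev_ord_inj) /= rmorph_sum mulr_sumr; apply: eq_bigr => i _.
have i_m : (i <= m)%N by rewrite -ltnS.
rewrite !subSS refl_coef_horner // rmorphM rmorphXn /= conjC_inv_conj expr_sub_inv //.
by rewrite mulrACA.
Qed.

Lemma ev3_revq_refl z w eta : z != 0 ->
  ev3 (revq m pt) z w eta^* = z ^+ n * (ev2 p (z^*)^-1 eta)^*.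
Proof.
move=> z0; rewrite ev3_revq (ev2_sum _ _ p_wdeg) rmorph_sum mulr_sumr.
apply: eq_bigr => k _; have k_m : (k <= m)%N by rewrite -ltnS.
by rewrite refl_coef_horner // rmorphM rmorphXn mulrA.
Qed.

Lemma ev3_revq_p z w eta : z != 0 ->
  ev3 (revq m p) z w eta^* = z ^+ n * (ev2 pt (z^*)^-1 eta)^*.
Proof.
move=> z0; rewrite ev3_revq (ev2_sum _ _ size_refl) rmorph_sum mulr_sumr.
apply: eq_bigr => k _; have k_m : (k <= m)%N by rewrite -ltnS.
by rewrite refl_coef_horner_sym // rmorphM rmorphXn mulrA.
Qed.

Lemma ev3_Lpoly_num z w e : (1 - w * e) * ev3 Lpoly z w e =
  ev2 p z w * ev3 (revq m pt) z w e - ev2 pt z w * ev3 (revq m p) z w e.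
Proof.
have := congr1 (fun P => ev3 P z w e) Lpoly_num.
rewrite /= ev3M !ev3B !ev3M !ev3C => <-; congr (_ * _).
by rewrite /ev3 /ev2 !hornerE.
Qed.

Lemma Lfun_Lpoly z w eta : z != 0 -> w * eta^* != 1 ->
  Lfun n m p z w eta = evL Lpoly z w eta.
Proof.
move=> z0 we; have we' : 1 - w * eta^* != 0 by rewrite subr_eq0 eq_sym.
apply: (mulfI we'); rewrite /Lfun /evL ev3_Lpoly_num ev3_revq_refl // ev3_revq_p //.
by rewrite mulrC divfK // mulrBr !(mulrCA (z ^+ n)).
Qed.

Lemma ev3_Lpoly_closed z w e : e != 0 -> w * e != 1 -> ev3 Lpoly z w e =
  e ^+ m * (ev2 p z w * ev2 pt z e^-1 - ev2 pt z w * ev2 p z e^-1) / (1 - w * e).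
Proof.
move=> e0 we; have we' : 1 - w * e != 0 by rewrite subr_eq0 eq_sym.
apply: (mulfI we'); rewrite [RHS]mulrC divfK // ev3_Lpoly_num.
by rewrite !ev3_revq_rev // ?size_refl // mulrBr !(mulrCA (e ^+ m)).
Qed.

(* The symmetry (3) at generic points, by direct computation from the closed formula
   and the reflection identity. *)
Lemma ev3_Lpoly_sym_generic z w e :
  z != 0 -> w != 0 -> e != 0 -> w * e != 1 -> (1 <= m)%N ->
  ev3 Lpoly z w e =
  z ^+ (2 * n) * (w * e) ^+ (m - 1) * (ev3 Lpoly (z^*)^-1 (w^*)^-1 (e^*)^-1)^*.
Proof.
move=> z0 w0 e0 we m_gt0.
have z'0 : (z^*)^-1 != 0 by rewrite invr_eq0 conjC_eq0.
have w'0 : (w^*)^-1 != 0 by rewrite invr_eq0 conjC_eq0.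
have e'0 : (e^*)^-1 != 0 by rewrite invr_eq0 conjC_eq0.
have we' : (w^*)^-1 * (e^*)^-1 != 1.
  rewrite -invfM -rmorphM invr_eq1; apply: contra we => /eqP h.
  by rewrite -(conjCK (w * e)) h rmorph1.
rewrite ev3_Lpoly_closed // ev3_Lpoly_closed // invrK.
(* Express the four values of ptilde through values of p. *)
have pt_zw := ev2_refl z0 w0.
have pt_ze := ev2_refl z0 (invr_neq0 e0); rewrite fmorphV invrK in pt_ze.
have pt_zw' := ev2_refl z'0 w'0; rewrite !conjC_inv_conj !invrK in pt_zw'.
have e_conj0 : e^* != 0 by rewrite conjC_eq0.
have pt_ze' := ev2_refl z'0 e_conj0; rewrite !conjC_inv_conj conjCK !invrK in pt_ze'.
rewrite pt_zw pt_ze pt_zw' pt_ze'.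
rewrite !(rmorphM, rmorphB, rmorphXn, fmorphV, rmorph1, conjCK) /= !conjCK.
(* What remains is an identity between rational functions of these values. *)
move: (ev2 p z w) (ev2 p z e^-1) ((ev2 p _ (w^*)^-1)^*) ((ev2 p _ e^*)^*) => A B A' B'.
rewrite !exprVn -(subnK m_gt0) addn1 mul2n -addnn exprD.
move: (m - 1)%N => k; rewrite subn1 /= exprMn !exprS.
have ek0 : e ^+ k != 0 by rewrite expf_neq0.
have wk0 : w ^+ k != 0 by rewrite expf_neq0.
have zn0 : z ^+ n != 0 by rewrite expf_neq0.
move: (e ^+ k) (w ^+ k) (z ^+ n) ek0 wk0 zn0 => Ek Wk Zn ek0 wk0 zn0.
field.
by rewrite e0 w0 wk0 zn0 ek0 !subr_eq0 we eq_sym we.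
Qed.

Definition Lslice (z w : C) : {poly C} := \poly_(k < m) ev2 Lpoly`_k z w.

Definition Lslice_refl (z w : C) : {poly C} :=
  \poly_(k < m) (z ^+ (2 * n) * w ^+ (m - 1) * (ev2 Lpoly`_(m - k.+1) (z^*)^-1 (w^*)^-1)^*).

Lemma Lslice_horner z w e : (Lslice z w).[e] = ev3 Lpoly z w e.
Proof. by rewrite horner_poly (ev3_sum _ _ _ size_Lpoly). Qed.

Lemma Lslice_refl_horner z w e : e != 0 -> (Lslice_refl z w).[e] =
  z ^+ (2 * n) * (w * e) ^+ (m - 1) * (ev3 Lpoly (z^*)^-1 (w^*)^-1 (e^*)^-1)^*.
Proof.
move=> e0; rewrite horner_poly (ev3_sum _ _ _ size_Lpoly) rmorph_sum mulr_sumr.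
rewrite (reindex_inj rev_ord_inj) /=; apply: eq_bigr => k _.
have k_m := ltn_ord k.
rewrite rmorphM rmorphXn /= conjC_inv_conj exprMn.
have -> : e ^+ (m - k.+1) = e ^+ (m - 1) * e^-1 ^+ k.
  by rewrite -expr_sub_inv //; [congr (_ ^+ _) | ]; lia.
have -> : (m - (m - k.+1).+1 = k)%N by lia.
by rewrite !mulrA; congr (_ * _); rewrite mulrAC.
Qed.

(* The generic symmetry lifted to an identity of polynomials in e: multiplied by
   e (1 - w e), the difference vanishes everywhere. *)
Lemma Lslice_sym z w : (1 <= m)%N -> z != 0 -> w != 0 -> Lslice z w = Lslice_refl z w.
Proof.
move=> m_gt0 z0 w0; apply/eqP; rewrite -subr_eq0; apply/eqP.
have Q0 : 'X * (1 - w%:P * 'X) != 0 :> {poly C}.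
  rewrite mulf_neq0 ?polyX_eq0 //; apply/eqP => /(congr1 (fun q : {poly C} => q`_0)).
  by rewrite coefB coef1 coefCM coefX mulr0 subr0 coef0 => /eqP; rewrite oner_eq0.
suff : (Lslice z w - Lslice_refl z w) * ('X * (1 - w%:P * 'X)) = 0.
  by move/eqP; rewrite mulf_eq0 (negPf Q0) orbF => /eqP.
apply: poly_eq0_everywhere => x.
rewrite !hornerM !hornerX !hornerD !hornerN !hornerM !hornerX !hornerC.
have [->|x0] := eqVneq x 0; first by rewrite !mul0r mulr0.
have [wx|wx] := eqVneq (w * x) 1; first by rewrite wx subrr !mulr0.
by rewrite Lslice_horner Lslice_refl_horner // -ev3_Lpoly_sym_generic // subrr mul0r.
Qed.

Lemma Lpoly_sym z w eta : (1 <= m)%N -> z != 0 -> w != 0 -> eta != 0 ->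
  evL Lpoly z w eta =
  z ^+ (2 * n) * (w * eta^*) ^+ (m - 1) * (evL Lpoly (z^*)^-1 (w^*)^-1 (eta^*)^-1)^*.
Proof.
move=> m_gt0 z0 w0 e0.
rewrite /evL -Lslice_horner Lslice_sym // Lslice_refl_horner ?conjC_eq0 //.
by rewrite fmorphV.
Qed.

Lemma Lpoly_coef_sym k z w : (1 <= m)%N -> leq k (m - 1) -> z != 0 -> w != 0 ->
  ev2 Lpoly`_k z w =
  z ^+ (2 * n) * w ^+ (m - 1) * (ev2 Lpoly`_(m - k - 1) (z^*)^-1 (w^*)^-1)^*.
Proof.
move=> m_gt0 km z0 w0.
have := congr1 (fun q : {poly C} => q`_k) (Lslice_sym m_gt0 z0 w0).
rewrite /= !coef_poly.
have -> : (k < m)%N by lia.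
by have -> : (m - k.+1 = m - k - 1)%N by lia.
Qed.

Hypothesis p_stable : stable p.

Local Notation at1 := (map_poly (horner_eval (1 : C))).

Lemma at1_horner (q : {poly {poly C}}) (x : C) : (at1 q).[x] = ev2 q 1 x.
Proof.
have := horner_map (horner_eval (1 : C)) q x%:P.
by rewrite /= !horner_evalE hornerC => ->.
Qed.

(* ptilde(1, .) has degree exactly m: its top coefficient is conj p(1, 0) != 0. *)
Lemma at1_refl_top : (at1 pt)`_m != 0.
Proof.
have := refl_coef_horner (leq0n m) (oner_neq0 C).
rewrite subn0 coef_map /= horner_evalE => ->.
rewrite expr1n mul1r rmorph1 invr1 conjC_eq0.
have norm1 : `|1 : C| <= 1 by rewrite normr1.
have norm0 : `|0 : C| <= 1 by rewrite normr0 ler01.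
by have := p_stable norm1 norm0; rewrite /ev2 horner_coef0.
Qed.

(* p(1, .) and ptilde(1, .) have no common root: a root x of p(1, .) satisfies
   |x| > 1 by stability, and then 1/conj x would be a root of p(1, .) in the disk. *)
Lemma at1_coprime : coprimep (at1 pt) (at1 p).
Proof.
apply: Pdiv.ClosedField.root_coprimep => x /rootP pt_x.
rewrite at1_horner; apply/negP => /eqP p_x.
have norm1 : `|1 : C| <= 1 by rewrite normr1.
have x_out : ~~ (`|x| <= 1) by apply/negP => x_in; have := p_stable norm1 x_in; rewrite p_x eqxx.
have x0 : x != 0 by apply: contra x_out => /eqP ->; rewrite normr0 ler01.
move: pt_x; rewrite at1_horner (ev2_refl (oner_neq0 C) x0) => /eqP.
rewrite expr1n mul1r mulf_eq0 expf_eq0 (negPf x0) andbF /= conjC_eq0 rmorph1 invr1 => /eqP p_x'.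
have : `|(x^*)^-1| <= 1.
  rewrite normfV norm_conjC invf_le1 ?normr_gt0 //; apply: ltW.
  by rewrite real_ltNge ?normr_real ?real1.
by move/(p_stable norm1); rewrite p_x' eqxx.
Qed.

Lemma size_at1 (q : {poly {poly C}}) : leq (size (at1 q)) (size q).
Proof. by apply/leq_sizeP => j hj; rewrite coef_map nth_default // raddf0. Qed.

Lemma size_at1_tail k : (k < m)%N -> size (at1 (tail m pt k)) = k.+1.
Proof.
move=> km; apply/eqP; rewrite eqn_leq (leq_trans (size_at1 _) (size_poly _ _)) /=.
have top_k : (at1 (tail m pt k))`_k = (at1 pt)`_m.
  by rewrite !coef_map coef_poly ltnSn subnK // ltnW.
rewrite ltnNge; apply: contra at1_refl_top => /leq_sizeP/(_ k (leqnn k)).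
by rewrite top_k => ->.
Qed.

(* At z = 1 a
   relation gives p(1,.) S = ptilde(1,.) T with S a combination of the tails of
   ptilde(1,.); by coprimality ptilde(1,.) divides S, of degree < m, so S = 0 and the
   relation is trivial since the tails have distinct degrees. *)
Lemma Lpoly_coef_indep (d : 'I_m -> C) :
  \sum_(k < m) (d k)%:P%:P * Lpoly`_k = 0 -> forall k, d k = 0.
Proof.
move=> sum0.
pose S := \sum_(k < m) d k *: at1 (tail m pt k).
pose T := \sum_(k < m) d k *: at1 (tail m p k).
have S_T : at1 p * S = at1 pt * T.
  apply/eqP; rewrite -subr_eq0; apply/eqP.
  have := congr1 at1 sum0; rewrite rmorph0 rmorph_sum => <-.
  rewrite /S /T !mulr_sumr -sumrB; apply: eq_bigr => k _.
  rewrite rmorphM /= map_polyC /= horner_evalE hornerC coefB !coefCM !coef_poly (ltn_ord k).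
  by rewrite rmorphB !rmorphM /= mulrBr -!mul_polyC !(mulrCA (d k)%:P).
have S_dvd : at1 pt %| S by rewrite -(Gauss_dvdpl S at1_coprime) mulrC S_T dvdp_mulIl.
have size_S : leq (size S) m.
  apply: leq_trans (size_sum _ _ _) _; apply/bigmax_leqP => k _.
  by apply: leq_trans (size_scale_leq _ _) _; rewrite size_at1_tail.
have size_pt1 : (m < size (at1 pt))%N.
  by rewrite ltnNge; apply: contra at1_refl_top => /leq_sizeP ->.
have S0 : S = 0.
  apply/eqP; apply: contraT => S_neq0.
  by have := leq_trans (dvdp_leq S_neq0 S_dvd) size_S; rewrite leqNgt size_pt1.
by apply: (scale_sum_distinct_sizes (Q := fun k => at1 (tail m pt k))) S0 => k; rewrite size_at1_tail.
Qed.

Local Notation V := (Vandermonde m (\row_j nat_nodes C j)).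

(* Combinations of L at the nodes, in terms of the coefficients a_k (the nodes are real,
   so conjugating them changes nothing). *)
Lemma Lpoly_nodes_horner (c : 'I_m -> C) :
  \sum_(i < m) (c i)%:P%:P * Lpoly.[(nat_nodes C i)^*%:P%:P] =
  \sum_(k < m) ((V *m \col_i c i) k 0)%:P%:P * Lpoly`_k.
Proof.
under eq_bigr => i _ do rewrite rmorph_nat.
rewrite (sum_horner_lift2 _ _ size_Lpoly); apply: eq_bigr => k _; congr (_%:P%:P * _).
by rewrite !mxE; apply: eq_bigr => i _; rewrite !mxE mulrC.
Qed.

Lemma Lpoly_nodes_indep (c : 'I_m -> C) :
  \sum_(i < m) (c i)%:P%:P * Lpoly.[(nat_nodes C i)^*%:P%:P] = 0 -> forall i, c i = 0.
Proof.
rewrite Lpoly_nodes_horner => /Lpoly_coef_indep V_c0 i.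
have V_c : V *m \col_i c i = 0 by apply/matrixP => k l; rewrite ord1 V_c0 mxE.
have := congr1 (fun M : 'cV[C]_m => (invmx V *m M) i 0) V_c.
by rewrite /= mulKmx ?nat_vandermonde_unit // mulmx0 !mxE.
Qed.

Lemma Lpoly_nodes_span eta : exists c : 'I_m -> C,
  Lpoly.[eta^*%:P%:P] = \sum_(i < m) (c i)%:P%:P * Lpoly.[(nat_nodes C i)^*%:P%:P].
Proof.
pose powers : 'cV[C]_m := \col_k eta^* ^+ k.
exists (fun i => (invmx V *m powers) i 0).
rewrite Lpoly_nodes_horner (horner_lift2 _ size_Lpoly); apply: eq_bigr => k _.
have -> : \col_i (invmx V *m powers) i 0 = invmx V *m powers.
  by apply/matrixP => i l; rewrite ord1 mxE.
by rewrite mulKVmx ?nat_vandermonde_unit // mxE.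
Qed.

End Kernel.

Unset Implicit Arguments.

Theorem mainTheorem2 (C : numClosedFieldType) (n m : nat) (p : {poly {poly C}}) :
  (1 <= n)%N -> (1 <= m)%N -> bideg n m p -> stable p ->
  exists Lp : {poly {poly {poly C}}},
    (* (1) L is a polynomial in (z, w, conj eta) with the degree bounds *)
    (degs3 (2 * n) (m - 1) (m - 1) Lp /\
     forall z w eta : C, z != 0 -> w * eta^* != 1 ->
       Lfun n m p z w eta = evL Lp z w eta) /\
    (* (2) the polynomials L(.,.;eta), eta in C, span a space of dimension m *)
    (exists etas : 'I_m -> C,
       (forall c : 'I_m -> C,
          \sum_(i < m) (c i)%:P%:P * Lp.[(etas i)^*%:P%:P] = 0 -> forall i, c i = 0) /\
       (forall eta : C, exists c : 'I_m -> C,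
          Lp.[eta^*%:P%:P] = \sum_(i < m) (c i)%:P%:P * Lp.[(etas i)^*%:P%:P])) /\
    (* (3) symmetry and its consequence for the coefficients a_k *)
    (forall z w eta : C, z != 0 -> w != 0 -> eta != 0 ->
       evL Lp z w eta =
       z ^+ (2 * n) * (w * eta^*) ^+ (m - 1) *
       (evL Lp (z^*)^-1 (w^*)^-1 (eta^*)^-1)^*) /\
    (forall (k : nat) (z w : C), leq k (m - 1) -> z != 0 -> w != 0 ->
       ev2 Lp`_k z w =
       z ^+ (2 * n) * w ^+ (m - 1) * (ev2 Lp`_(m - k - 1) (z^*)^-1 (w^*)^-1)^*) /\
    (* (4) L = p A + ptilde B *)
    (exists A B : {poly {poly {poly C}}},
       degs3 n (m - 1) (m - 1) A /\ degs3 n (m - 1) (m - 1) B /\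
       Lp = p%:P * A + (refl n m p)%:P * B).
Proof.
move=> _ m_gt0 [p_wsize [p_zdeg _]] p_stable.
have p_wdeg : leq (size p) m.+1 by rewrite p_wsize.
exists (Lpoly n m p); split; first split.
- exact: degs3_Lpoly.
- by move=> z w eta; apply: Lfun_Lpoly.
split.
  exists (@nat_nodes C m); split; first exact: Lpoly_nodes_indep.
  exact: Lpoly_nodes_span.
split; first by move=> z w eta; apply: Lpoly_sym.
split; first by move=> k z w; apply: Lpoly_coef_sym.
exists (quot m (refl n m p)), (- quot m p).
split; first exact: degs3_quot (@size_refl_coef C n m p).
split; first exact/degs3N/degs3_quot.
exact: Lpoly_decomp.
Qed.
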